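(* Every equivalence corelation in $\mathbf{MetCH_{sep}}$ is effective.
   Context: A metric on a set $X$ is a map $d\colon X\times X\to[0,\infty]$ with $d(x,x)=0$ and $d(x,z)\le d(x,y)+d(y,z)$ (not necessarily symmetric, $\infty$ allowed); separated means $d(x,y)=0=d(y,x)$ implies $x=y$. A separated metric compact Hausdorff space is a compact Hausdorff space with a separated metric continuous $X\times X\to[0,\infty]$ for the upper topology on $[0,\infty]$ (open sets $]u,\infty]$); $\mathbf{MetCH_{sep}}$ is the category of these with continuous non-expansive maps. $X+X$ denotes the coproduct (disjoint union, coproduct topology, metric equal to $d$ within each copy and $\infty$ between copies). A binary corelation on $X$ is a surjective morphism $\binom{q_0}{q_1}\colon X+X\to S$ (given by $q_0,q_1\colon X\to S$), taken up to isomorphism under $X+X$. It is reflexive if there is a morphism $e\colon S\to X$ with $e\circ q_0=e\circ q_1=1_X$; symmetric if there is $s\colon S\to S$ with $s\circ q_0=q_1$ and $s\circ q_1=q_0$; transitive if, letting $\lambda_0,\lambda_1\colon S\to P$ be the pushout of $q_1$ and $q_0$ (so $\lambda_0\circ q_1=\lambda_1\circ q_0$), there is $t\colon S\to P$ with $t\circ q_0=\lambda_0\circ q_0$ and $t\circ q_1=\lambda_1\circ q_1$. An equivalence corelation is one that is reflexive, symmetric and transitive. It is effective if, with $i\colon A\to X$ the equaliser of $q_0,q_1$ in $\mathbf{MetCH_{sep}}$, the square $q_0\circ i=q_1\circ i$ is a pushout in $\mathbf{MetCH_{sep}}$ (i.e. $(q_0,q_1)$ is the cokernel pair of its equaliser).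 *)

From HB Require Import structures.
From mathcomp Require Import all_boot all_order all_algebra.
From mathcomp Require Import all_classical all_reals topology.
Set Implicit Arguments. Unset Strict Implicit. Unset Printing Implicit Defensive.
Import Order.TTheory GRing.Theory Num.Theory.

Local Open Scope classical_set_scope.
Local Open Scope ereal_scope.

Section MetCHsep.
Variable R : realType.

(* An object of MetCH_sep: a compact Hausdorff space with a separated
   (possibly asymmetric, possibly infinite) metric d : X x X -> [0,oo]
   which is continuous for the upper topology on [0,oo], i.e. every
   preimage of ]u,oo] is open in X x X (for u = +oo the preimage is empty). *)
Record metCH := MetCH {
  mc_top :> topologicalType;
  mc_d : mc_top -> mc_top -> \bar R;
  mc_d_ge0 : forall x y, 0 <= mc_d x y;
  mc_d_refl : forall x, mc_d x x = 0;
  mc_d_triangle : forall x y z, mc_d x z <= mc_d x y + mc_d y z;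
  mc_d_sep : forall x y, mc_d x y = 0 -> mc_d y x = 0 -> x = y;
  mc_d_cont : forall u : R,
      open [set p : mc_top * mc_top | u%:E < mc_d p.1 p.2];
  mc_compact : compact [set: mc_top];
  mc_hausdorff : hausdorff_space mc_top }.

Definition mor (X Y : metCH) (f : X -> Y) : Prop :=
  continuous f /\ forall x y : X, mc_d (f x) (f y) <= mc_d x y.

Definition is_pushout (A B C P : metCH) (f : A -> B) (g : A -> C)
    (p1 : B -> P) (p2 : C -> P) : Prop :=
  [/\ mor p1, mor p2, p1 \o f = p2 \o g &
    forall (Q : metCH) (h1 : B -> Q) (h2 : C -> Q),
      mor h1 -> mor h2 -> h1 \o f = h2 \o g ->
      exists u : P -> Q, [/\ mor u, u \o p1 = h1, u \o p2 = h2 &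
        forall v : P -> Q, mor v -> v \o p1 = h1 -> v \o p2 = h2 -> v = u]].

Definition is_equaliser (E X Y : metCH) (f g : X -> Y) (i : E -> X) : Prop :=
  [/\ mor i, f \o i = g \o i &
    forall (Z : metCH) (h : Z -> X), mor h -> f \o h = g \o h ->
      exists u : Z -> E, [/\ mor u, i \o u = h &
        forall v : Z -> E, mor v -> i \o v = h -> v = u]].

(* A binary corelation on X: a surjective morphism (q0 q1) : X + X -> S.
   A map X + X -> S is a morphism iff both components are (coproduct
   topology, metric oo between copies), and it is surjective iff q0, q1
   are jointly surjective. *)
Definition corelation (X S : metCH) (q0 q1 : X -> S) : Prop :=
  [/\ mor q0, mor q1 & forall s : S, exists x : X, q0 x = s \/ q1 x = s].

Definition reflexive_corel (X S : metCH) (q0 q1 : X -> S) : Prop :=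
  exists e : S -> X, [/\ mor e, e \o q0 = id & e \o q1 = id].

Definition symmetric_corel (X S : metCH) (q0 q1 : X -> S) : Prop :=
  exists s : S -> S, [/\ mor s, s \o q0 = q1 & s \o q1 = q0].

Definition transitive_corel (X S : metCH) (q0 q1 : X -> S) : Prop :=
  forall (P : metCH) (l0 l1 : S -> P), is_pushout q1 q0 l0 l1 ->
    exists t : S -> P, [/\ mor t, t \o q0 = l0 \o q0 & t \o q1 = l1 \o q1].

Definition equivalence_corel (X S : metCH) (q0 q1 : X -> S) : Prop :=
  [/\ corelation q0 q1, reflexive_corel q0 q1, symmetric_corel q0 q1
    & transitive_corel q0 q1].

Definition effective_corel (X S : metCH) (q0 q1 : X -> S) : Prop :=
  forall (A : metCH) (i : A -> X), is_equaliser q0 q1 i ->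
    is_pushout i i q0 q1.

End MetCHsep.

From HB Require Import structures.
From mathcomp Require Import all_boot all_order all_algebra.
From mathcomp Require Import all_classical all_reals topology.
From mathcomp Require Import ereal ereal_normedtype.
From mathcomp Require Import ring lra.
Set Implicit Arguments. Unset Strict Implicit. Unset Printing Implicit Defensive.
Import Order.TTheory GRing.Theory Num.Theory.
Local Open Scope classical_set_scope.

(* Write rho x y := d (q0 x) (q1 y) ([cross_dist]).  Transitivity, applied
   to the explicit pushout of q1 and q0 (a subspace of S * S carrying a path
   metric), says that rho has approximate midpoints.  Iterating midpoints
   towards y with summable errors yields a rho-Cauchy sequence; by
   compactness and lower semicontinuity of d, any cluster point z satisfies
   rho z z = 0, i.e. q0 z = q1 z, and d x z + d z y <= rho x y + delta.
   Hence two morphisms agreeing on the equaliser satisfy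
   d (h1 x) (h2 y) <= rho x y, which is exactly the non-expansiveness of the
   map S -> Q they induce; its continuity holds because S is a compact
   Hausdorff quotient of X + X. *)

Lemma fst_continuous {T U : topologicalType} : continuous (@fst T U).
Proof. by case=> x y; exact: cvg_fst. Qed.

Lemma snd_continuous {T U : topologicalType} : continuous (@snd T U).
Proof. by case=> x y; exact: cvg_snd. Qed.

Lemma pair_continuous (Z T U : topologicalType) (f : Z -> T) (g : Z -> U) :
  continuous f -> continuous g -> continuous (fun z => (f z, g z)).
Proof. by move=> cf cg z; apply: cvg_pair; [exact: cf|exact: cg]. Qed.

Lemma id_continuous (T : topologicalType) : continuous (@id T).
Proof. by move=> x; exact: cvg_id. Qed.

Lemma comp_continuous (T U V : topologicalType) (f : T -> U) (g : U -> V) :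
  continuous f -> continuous g -> continuous (g \o f).
Proof. by move=> cf cg x; exact: continuous_comp (cf x) (cg (f x)). Qed.

Lemma cluster_nbhs_continuous (T U : topologicalType) (f : T -> U) (p q : T) :
  continuous f -> cluster (nbhs p) q -> cluster (nbhs (f p)) (f q).
Proof.
move=> cf pq A B /(cf p) fA /(cf q) fB.
by have [z [Az Bz]] := pq _ _ fA fB; exists (f z).
Qed.

Lemma injective_hausdorff (T U : topologicalType) (f : T -> U) :
  continuous f -> injective f -> hausdorff_space U -> hausdorff_space T.
Proof. by move=> cf inj_f hU p q /(cluster_nbhs_continuous cf) /hU /inj_f. Qed.

Lemma prod_hausdorff (T U : topologicalType) :
  hausdorff_space T -> hausdorff_space U -> hausdorff_space (T * U)%type.
Proof.
move=> hT hU [p1 p2] [q1 q2] pq; congr pair.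
  exact/hT/(cluster_nbhs_continuous fst_continuous pq).
exact/hU/(cluster_nbhs_continuous snd_continuous pq).
Qed.

Lemma closed_eqfun (T U : topologicalType) (f g : T -> U) :
  hausdorff_space U -> continuous f -> continuous g -> closed [set z | f z = g z].
Proof.
move=> hU cf cg z clz; apply: hU => A B fA gB.
have fgAB : nbhs z (f @^-1` A `&` g @^-1` B).
  by apply: filterI; [exact: cf|exact: cg].
have [w [fgw [Aw Bw]]] := clz _ fgAB.
by exists (f w); split => //; rewrite fgw.
Qed.

Lemma closed_bigcup_bool (T : topologicalType) (A : bool -> set T) :
  (forall b, closed (A b)) -> closed (\bigcup_b A b).
Proof.
move=> cA; have -> : \bigcup_b A b = A true `|` A false.
  apply/seteqP; split => [x [[] _ Ax]|x [Ax|Ax]];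
    by [left|right|exists true|exists false].
exact: closedU.
Qed.

Lemma closed_image_compact (Z Y : topologicalType) (f : Z -> Y) (C : set Z) :
  compact [set: Z] -> hausdorff_space Y -> continuous f -> closed C ->
  closed (f @` C).
Proof.
move=> cZ hY cf cC; apply: compact_closed => //.
apply: continuous_compact; first exact: continuous_subspaceT.
exact: subclosed_compact cC cZ _.
Qed.

Definition jointly_surjective (Z Y : Type) (f0 f1 : Z -> Y) :=
  forall y, exists z, f0 z = y \/ f1 z = y.

Lemma jointly_surjective_eq (Z Y W : Type) (f0 f1 : Z -> Y) (u v : Y -> W) :
  jointly_surjective f0 f1 -> u \o f0 = v \o f0 -> u \o f1 = v \o f1 -> u = v.
Proof.
move=> f01 uv0 uv1; apply/funext => y.
have [z [<-|<-]] := f01 y.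
  exact: (congr1 (@^~ z) uv0).
exact: (congr1 (@^~ z) uv1).
Qed.

Lemma factor_through_cover (Z Y W : Type) (f0 f1 : Z -> Y) (r0 r1 : Y -> Z)
    (h0 h1 : Z -> W) :
  cancel f0 r0 -> cancel f1 r1 -> (forall a b, f0 a = f1 b -> h0 a = h1 b) ->
  exists u : Y -> W, u \o f0 = h0 /\ u \o f1 = h1.
Proof.
move=> f0K f1K h01.
exists (fun y => if pselect (exists a, f0 a = y) then h0 (r0 y) else h1 (r1 y)).
split; apply/funext => z /=; case: pselect => [[a fa]|nf0] /=.
- by rewrite f0K.
- by exfalso; apply: nf0; exists z.
- by rewrite -fa f0K; exact: h01.
- by rewrite f1K.
Qed.

Lemma continuous_jointly_surjective (Z Y W : topologicalType) (f0 f1 : Z -> Y)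
    (g : Y -> W) :
  compact [set: Z] -> hausdorff_space Y -> continuous f0 -> continuous f1 ->
  jointly_surjective f0 f1 ->
  continuous (g \o f0) -> continuous (g \o f1) -> continuous g.
Proof.
move=> cZ hY cf0 cf1 f01 cgf0 cgf1; apply/continuous_closedP => C cC.
have -> : g @^-1` C = f0 @` ((g \o f0) @^-1` C) `|` f1 @` ((g \o f1) @^-1` C).
  apply/seteqP; split => [y Cy|y [[z Cz <-]|[z Cz <-]]] //.
  by have [z [fz|fz]] := f01 y; subst y; [left|right]; exists z.
apply: closedU; apply: closed_image_compact => //.
  exact: (proj1 (continuous_closedP _) cgf0).
exact: (proj1 (continuous_closedP _) cgf1).
Qed.

Section lower_semicontinuity.
Context {R : realType}.
Local Open Scope ereal_scope.

Lemma lower_semicontinuous_comp (T U : topologicalType) (f : U -> \bar R)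
    (h : T -> U) :
  continuous h -> lower_semicontinuous f -> lower_semicontinuous (f \o h).
Proof.
move=> ch /lower_semicontinuousP f_lsc; apply/lower_semicontinuousP => a.
exact: open_comp (f_lsc a).
Qed.

Lemma lower_semicontinuousD_ge0 (T : topologicalType) (f g : T -> \bar R) :
  (forall z, 0 <= f z) -> (forall z, 0 <= g z) ->
  lower_semicontinuous f -> lower_semicontinuous g ->
  lower_semicontinuous (fun z => f z + g z).
Proof.
move=> f0 g0 /lower_semicontinuousP f_lsc /lower_semicontinuousP g_lsc.
apply/lower_semicontinuousP => c.
have -> : [set z | c%:E < f z + g z] =
    \bigcup_a ([set z | a%:E < f z] `&` [set z | (c - a)%:E < g z]).
  apply/seteqP; split => [z /=|z [a _ [/= af bg]]]; last first.
    by have := lteD af bg; rewrite -EFinD addrC subrK.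
  move: (f0 z) (g0 z) => /gee0P[fz|[r1 r10 fz]] /gee0P[gz|[r2 r20 gz]];
    rewrite fz gz => cfg; [exists 0%R|exists (c - r2 + 1)%R|exists (r1 - 1)%R|
      exists (r1 - (r1 + r2 - c) / 2)%R] => //; split; rewrite /= ?fz ?gz ?ltry //.
  - by rewrite lte_fin; lra.
  - by rewrite lte_fin; lra.
  - by move: cfg; rewrite -EFinD !lte_fin; lra.
  - by move: cfg; rewrite -EFinD !lte_fin; lra.
by apply: bigcup_open => a _; apply: openI.
Qed.

Lemma closed_lsc_le (T : topologicalType) (f : T -> \bar R) (c : R) :
  lower_semicontinuous f -> closed [set z | f z <= c%:E].
Proof.
move=> /lower_semicontinuousP/(_ c); rewrite -closedC; congr closed.
by apply/seteqP; split => z /=; rewrite leNgt => /negP.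
Qed.

End lower_semicontinuity.

Section extended_reals.
Context {R : realType}.
Local Open Scope ereal_scope.

Lemma ereal_inf_le_add (A B C : set (\bar R)) :
  (forall a, A a -> 0 <= a) -> (forall b, B b -> 0 <= b) ->
  (forall a b, A a -> B b -> C (a + b)) ->
  ereal_inf C <= ereal_inf A + ereal_inf B.
Proof.
move=> A0 B0 ABC.
have iA0 : 0 <= ereal_inf A by exact: le_ereal_inf_tmp.
have iB0 : 0 <= ereal_inf B by exact: le_ereal_inf_tmp.
have [->|nAy] := eqVneq (ereal_inf A) +oo.
  by rewrite addye ?leey // gt_eqF // (lt_le_trans ltNy0).
have [->|nBy] := eqVneq (ereal_inf B) +oo.
  by rewrite addey ?leey // gt_eqF // (lt_le_trans ltNy0).
have fA : ereal_inf A \is a fin_num by rewrite ge0_fin_numE // ltey.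
have fB : ereal_inf B \is a fin_num by rewrite ge0_fin_numE // ltey.
apply/lee_addgt0Pr => eps eps0.
have eps20 : (0 < eps / 2)%R by rewrite divr_gt0.
have [a Aa ha] := lb_ereal_inf_adherent eps20 fA.
have [b Bb hb] := lb_ereal_inf_adherent eps20 fB.
apply: (le_trans (ereal_inf_lbound (ABC _ _ Aa Bb))).
rewrite [eps in eps%:E]splitr EFinD addeACA; apply: leeD; exact: ltW.
Qed.

Lemma dominated_increments_small (G : nat -> \bar R) (a : nat -> nat -> \bar R) :
  (forall n, 0 <= G n) -> G 0%N \is a fin_num -> (forall i j, 0 <= a i j) ->
  (forall i j, (i < j)%N -> a i j + G j <= G i) ->
  forall eps : R, (0 < eps)%R ->
    exists N, forall i j, (N <= i < j)%N -> a i j < eps%:E.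
Proof.
move=> G0 G0fin a0 aG eps eps0.
have G_nonincr i j : (i <= j)%N -> G j <= G i.
  rewrite leq_eqVlt => /orP[/eqP->//|/aG]; apply: le_trans; exact: leeDr.
have G_fin n : G n \is a fin_num.
  by rewrite ge0_fin_numE // (le_lt_trans (G_nonincr 0%N n _)) // -ge0_fin_numE.
have inf_fin : ereal_inf (range G) \is a fin_num.
  rewrite ge0_fin_numE; last by apply: le_ereal_inf_tmp => _ [n _ <-].
  apply: le_lt_trans (ereal_inf_lbound (ex_intro2 _ _ 0%N I erefl)) _.
  by rewrite -ge0_fin_numE.
have [_ [N _ <-] GN] := lb_ereal_inf_adherent eps0 inf_fin.
exists N => i j /andP[Ni ij].
rewrite -(lteD2rE _ _ (G_fin j)); apply: le_lt_trans (aG _ _ ij) _.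
apply: le_lt_trans (G_nonincr _ _ Ni) _; apply: lt_le_trans GN _.
by rewrite addeC; apply: leeD2l; apply: ereal_inf_lbound; exists j.
Qed.

End extended_reals.

Section clusters.
Context {R : realType} {T : topologicalType}.
Local Open Scope ereal_scope.

Lemma cluster_seq_frequently (u : nat -> T) (z : T) (N : nat) (B : set T) :
  cluster (u @ \oo) z -> nbhs z B -> exists2 n, (N <= n)%N & B (u n).
Proof.
move=> uz zB.
have uN : (u @ \oo) (u @` [set n | (N <= n)%N]).
  by apply: filterS (nbhs_infty_ge N) => n Nn; exists n.
by have [_ [[n Nn <-] Bun]] := uz _ _ uN zB; exists n.
Qed.

Lemma cluster_lsc_le (u : nat -> T) (z : T) (phi : T -> \bar R) (c : R) :
  cluster (u @ \oo) z -> lower_semicontinuous phi ->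
  (forall n, phi (u n) <= c%:E) -> phi z <= c%:E.
Proof.
move=> uz phi_lsc phi_c; rewrite leNgt; apply/negP => /phi_lsc[V zV Vphi].
have [n _ /Vphi] := cluster_seq_frequently 0 uz zV.
by rewrite ltNge phi_c.
Qed.

Lemma cluster_cauchy_diag_le0 (rho : T -> T -> \bar R) (u : nat -> T) (z : T) :
  cluster (u @ \oo) z -> lower_semicontinuous (fun p : T * T => rho p.1 p.2) ->
  (forall eps : R, (0 < eps)%R ->
    exists N, forall i j, (N <= i < j)%N -> rho (u i) (u j) < eps%:E) ->
  rho z z <= 0.
Proof.
move=> uz rho_lsc u_cauchy; apply/lee_addgt0Pr => eps eps0; rewrite add0e leNgt.
apply/negP => /(rho_lsc (z, z))[V [[U W] /= [zU zW] UWV] Vrho].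
have [N uN] := u_cauchy eps eps0.
have [i Ni uiUW] := cluster_seq_frequently N uz (filterI zU zW).
have [j ij ujUW] := cluster_seq_frequently i.+1 uz (filterI zU zW).
have := Vrho (u i, u j) (UWV (u i, u j) (conj uiUW.1 ujUW.2)).
by rewrite ltNge (ltW (uN i j _)) // Ni ij.
Qed.

End clusters.

Section approximate_midpoints.
Context {R : realType} {T : topologicalType} (rho : T -> T -> \bar R).
Hypotheses (T_compact : compact [set: T])
  (rho_ge0 : forall x y, (0 <= rho x y)%E)
  (rho_triangle : forall x w y, (rho x y <= rho x w + rho w y)%E)
  (rho_lsc : lower_semicontinuous (fun p : T * T => rho p.1 p.2))
  (rho_midpoint : forall x y (eps : R), (0 < eps)%R ->
     exists w, (rho x w + rho w y <= rho x y + eps%:E)%E).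
Local Open Scope ereal_scope.

Lemma midpoint_sequence y (eps : nat -> R) w0 : (forall n, 0 < eps n)%R ->
  exists w : nat -> T, w 0%N = w0 /\
    forall n, rho (w n) (w n.+1) + rho (w n.+1) y <= rho (w n) y + (eps n)%:E.
Proof.
move=> eps0.
have [f hf] := @choice _ _ (fun (nv : nat * T) v =>
  rho nv.2 v + rho v y <= rho nv.2 y + (eps nv.1)%:E)
  (fun nv => rho_midpoint nv.2 y (eps0 nv.1)).
by exists (fix w n := if n is n'.+1 then f (n', w n') else w0); split => // n;
  exact: (hf (n, _)).
Qed.

Lemma telescope_lyapunov (w : nat -> T) (G : nat -> \bar R) :
  (forall n, rho (w n) (w n.+1) + G n.+1 <= G n) ->
  forall i j, (i < j)%N -> rho (w i) (w j) + G j <= G i.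
Proof.
move=> wG i j /subnKC <-; elim: (j - i.+1)%N => [|k IH].
  by rewrite addn0; exact: wG.
rewrite addnS; apply: le_trans IH.
apply: le_trans (leeD2r _ (rho_triangle _ (w (i.+1 + k)%N) _)) _.
by rewrite -addeA; apply: leeD2l; exact: wG.
Qed.

Lemma lyapunov_midpoint_sequence x y (delta : R) : (0 < delta)%R ->
  exists (w : nat -> T) (G : nat -> \bar R),
    [/\ forall n, rho (w n) (w n.+1) + G n.+1 <= G n,
        forall n, rho (w n) y <= G n &
        forall n, rho x (w n) + G n <= rho x y + delta%:E].
Proof.
move=> delta0.
pose c n : R := (delta / 2 ^+ n)%R.
have c0 n : (0 < c n)%R by rewrite divr_gt0 // exprn_gt0.
have cS n : (c n.+1 + c n.+1 = c n)%R.
  by rewrite /c exprS; field; rewrite expf_neq0.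
have [w0 hw0] := rho_midpoint x y (c0 1%N).
have [w [w_0 hw]] := midpoint_sequence y w0 (fun n => c0 n.+2).
pose G n := rho (w n) y + (c n.+1)%:E.
have wG n : rho (w n) (w n.+1) + G n.+1 <= G n.
  rewrite /G -(cS n.+1) EFinD !addeA; apply: leeD2r; exact: hw.
exists w, G; split => // [n|n].
  by apply: leeDl; rewrite lee_fin ltW.
have G_0 : rho x (w 0%N) + G 0%N <= rho x y + delta%:E.
  have c_0 : c 0%N = delta by rewrite /c expr0 divr1.
  rewrite /G w_0 -c_0 -(cS 0%N) EFinD !addeA; apply: leeD2r; exact: hw0.
case: n => [//|n]; apply: le_trans G_0.
apply: le_trans (leeD2r _ (rho_triangle _ (w 0%N) _)) _.
by rewrite -addeA; apply: leeD2l; exact: telescope_lyapunov.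
Qed.

Lemma approximate_midpoints_diag x y (delta : R) : (0 < delta)%R ->
  rho x y \is a fin_num ->
  exists2 z, rho z z = 0 & rho x z + rho z y <= rho x y + delta%:E.
Proof.
move=> delta0 rxy_fin.
have [w [G [wG wyG G_bound]]] := lyapunov_midpoint_sequence x y delta0.
have G0 n : 0 <= G n := le_trans (rho_ge0 _ _) (wyG n).
have G0_fin : G 0%N \is a fin_num.
  rewrite ge0_fin_numE //; apply: le_lt_trans (leeDr _ (rho_ge0 x (w 0%N))) _.
  by apply: le_lt_trans (G_bound 0%N) _; rewrite -(fineK rxy_fin) -EFinD ltry.
have w_cauchy := dominated_increments_small G0 G0_fin
  (fun i j => rho_ge0 (w i) (w j)) (telescope_lyapunov wG).
have [z [_ wz]] := @T_compact (w @ \oo) _ filterT.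
exists z.
  apply/le_anti/andP; split; last exact: rho_ge0.
  exact: cluster_cauchy_diag_le0 wz rho_lsc w_cauchy.
rewrite -(fineK rxy_fin) -EFinD.
apply: (cluster_lsc_le (phi := fun v => rho x v + rho v y) wz).
  apply: lower_semicontinuousD_ge0 => //.
  - exact: (lower_semicontinuous_comp (h := fun v => (x, v))
      (pair_continuous (@cst_continuous T T x) (@id_continuous T)) rho_lsc).
  - exact: (lower_semicontinuous_comp (h := fun v => (v, y))
      (pair_continuous (@id_continuous T) (@cst_continuous T T y)) rho_lsc).
move=> n; rewrite EFinD fineK //; apply: le_trans (G_bound n).
exact: leeD2l (wyG n).
Qed.

End approximate_midpoints.

Section metCH_lemmas.
Context {R : realType}.
Local Open Scope ereal_scope.

Lemma mc_d_lsc (X : metCH R) :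
  lower_semicontinuous (fun p : X * X => mc_d p.1 p.2).
Proof. by apply/lower_semicontinuousP => u; exact: mc_d_cont. Qed.

Lemma mor_retraction_isometry (X Y : metCH R) (f : X -> Y) (r : Y -> X) :
  mor f -> mor r -> cancel f r -> forall x y, mc_d (f x) (f y) = mc_d x y.
Proof.
move=> [_ f_ne] [_ r_ne] fK x y; apply/le_anti/andP; split; first exact: f_ne.
by rewrite -{1}(fK x) -{1}(fK y); exact: r_ne.
Qed.

Lemma mor_cst (X Y : metCH R) (y : Y) : mor (fun _ : X => y).
Proof. by split; [exact: cst_continuous|move=> *; rewrite mc_d_refl mc_d_ge0]. Qed.

Lemma equaliser_image (A X Y : metCH R) (f g : X -> Y) (i : A -> X) :
  is_equaliser f g i -> forall x, f x = g x -> exists a, i a = x.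
Proof.
move=> [_ _ univ] x fgx.
have [u [_ iu _]] := univ X (fun _ => x) (mor_cst _ x) (funext (fun _ => fgx)).
by exists (u x); exact: (congr1 (@^~ x) iu).
Qed.

Lemma is_pushout_cover (A B P : metCH R) (f g : A -> B) (p1 p2 : B -> P)
    (r1 r2 : P -> B) :
  mor p1 -> mor p2 -> cancel p1 r1 -> cancel p2 r2 -> p1 \o f = p2 \o g ->
  jointly_surjective p1 p2 ->
  (forall a b, p1 a = p2 b -> exists c, f c = a /\ g c = b) ->
  (forall (Q : metCH R) (h1 h2 : B -> Q) (u : P -> Q), mor h1 -> mor h2 ->
     u \o p1 = h1 -> u \o p2 = h2 -> forall x y, mc_d (u x) (u y) <= mc_d x y) ->
  is_pushout f g p1 p2.
Proof.
move=> p1_mor p2_mor p1K p2K p12 p_surj p_overlap u_ne.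
split => // Q h1 h2 h1_mor h2_mor h12.
have [u [up1 up2]] : exists u : P -> Q, u \o p1 = h1 /\ u \o p2 = h2.
  apply: factor_through_cover p1K p2K _ => a b /p_overlap[c [<- <-]].
  exact: (congr1 (@^~ c) h12).
exists u; split => //.
- split; last exact: u_ne h1_mor h2_mor up1 up2.
  apply: (continuous_jointly_surjective (@mc_compact R B) (@mc_hausdorff R P)
    p1_mor.1 p2_mor.1 p_surj).
  + by rewrite up1; exact: h1_mor.1.
  + by rewrite up2; exact: h2_mor.1.
- move=> v _ vp1 vp2; apply: (jointly_surjective_eq p_surj).
  + by rewrite vp1 up1.
  + by rewrite vp2 up2.
Qed.

End metCH_lemmas.

Section gluing.
Context {R : realType} {X S : metCH R} (q0 q1 : X -> S) (e : S -> X).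
Hypotheses (q0_mor : mor q0) (q1_mor : mor q1) (e_mor : mor e)
  (q0K : cancel q0 e) (q1K : cancel q1 e).
Local Open Scope ereal_scope.

Let q0_isometry := mor_retraction_isometry q0_mor e_mor q0K.
Let q1_isometry := mor_retraction_isometry q1_mor e_mor q1K.

(* The pushout of [q1] and [q0] is realised inside [S * S]: the copy
   [glue false] of [S] is the graph of [q0 \o e], the copy [glue true] is the
   transposed graph of [q1 \o e], and the two copies meet exactly in the
   points [(q1 z, q0 z)].  Its metric is the infimum of the lengths of the
   paths that jump at most once between the copies ([glue_path]). *)
Definition glue (b : bool) (s : S) : S * S :=
  if b then (q1 (e s), s) else (s, q0 (e s)).

Lemma glue_inj b : injective (glue b).
Proof. by case: b => s s' [] => [_|] ->. Qed.

Lemma glue_overlap a b :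
  glue false a = glue true b -> exists z, q1 z = a /\ q0 z = b.
Proof. by case=> a_eq b_eq; exists (e a); rewrite {1}a_eq q1K -a_eq. Qed.

Lemma glue_overlap_dist b a a' c c' :
  glue b a = glue (~~ b) a' -> glue b c = glue (~~ b) c' -> mc_d a c = mc_d a' c'.
Proof.
case: b => /= aa' cc'.
- have [z [<- <-]] := glue_overlap (esym aa').
  have [w [<- <-]] := glue_overlap (esym cc').
  by rewrite q0_isometry q1_isometry.
- have [z [<- <-]] := glue_overlap aa'.
  have [w [<- <-]] := glue_overlap cc'.
  by rewrite q0_isometry q1_isometry.
Qed.

Lemma glue_fst_le b s s' : mc_d (glue b s).1 (glue b s').1 <= mc_d s s'.
Proof. by case: b => //=; rewrite q1_isometry; exact: e_mor.2. Qed.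

Lemma glue_snd_le b s s' : mc_d (glue b s).2 (glue b s').2 <= mc_d s s'.
Proof. by case: b => //=; rewrite q0_isometry; exact: e_mor.2. Qed.

Definition glue_path (p p' : S * S) (c : \bar R) :=
  exists i s r j r' s', [/\ glue i s = p, glue j s' = p', glue i r = glue j r' &
    mc_d s r + mc_d r' s' <= c].

Lemma glue_path_le p p' c c' : c <= c' -> glue_path p p' c -> glue_path p p' c'.
Proof.
move=> cc' [i [s [r [j [r' [s' [ps ps' rr' cost]]]]]]].
by exists i, s, r, j, r', s'; split => //; exact: le_trans cc'.
Qed.

Lemma glue_path_ge0 p p' c : glue_path p p' c -> 0 <= c.
Proof.
move=> [i [s [r [j [r' [s' [_ _ _ cost]]]]]]]; apply: le_trans cost.
exact: adde_ge0 (mc_d_ge0 s r) (mc_d_ge0 r' s').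
Qed.

Lemma glue_path_step b s s' : glue_path (glue b s) (glue b s') (mc_d s s').
Proof. by exists b, s, s', b, s', s'; rewrite mc_d_refl adde0. Qed.

Lemma glue_path_coord p p' c : glue_path p p' c ->
  mc_d p.1 p'.1 <= c /\ mc_d p.2 p'.2 <= c.
Proof.
move=> [i [s [r [j [r' [s' [<- <- rr' cost]]]]]]].
split; apply: le_trans cost.
- apply: le_trans (mc_d_triangle _ (glue i r).1 _) _.
  by apply: leeD; [|rewrite rr']; exact: glue_fst_le.
- apply: le_trans (mc_d_triangle _ (glue i r).2 _) _.
  by apply: leeD; [|rewrite rr']; exact: glue_snd_le.
Qed.

(* A path that jumps twice between the copies of [S] can be shortened to one
   that jumps at most once, since the glued part is embedded isometrically in
   both copies; hence one-jump paths already satisfy the triangle inequality. *)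
Lemma glue_path_append p c k t t' :
  glue_path p (glue k t) c -> glue_path p (glue k t') (c + mc_d t t').
Proof.
move=> [i [s [r [j [r' [s' [ps s't rr' cost]]]]]]].
have [kj|kj] := eqVneq k j.
  subst k; move: s't => /glue_inj <-; exists i, s, r, j, r', t'; split => //.
  apply: le_trans (leeD2l _ (mc_d_triangle _ s' _)) _.
  by rewrite addeA; apply: leeD2r.
have kNj : k = ~~ j by move: kj; clear; case: k; case: j.
subst k.
have [ij|ij] := eqVneq i j.
  subst i; move: rr' cost => /glue_inj <- cost.
  exists j, s, s', (~~ j), t, t'; split => //.
  by apply: leeD2r; apply: le_trans (mc_d_triangle _ r _) cost.
have iNj : i = ~~ j by move: ij; clear; case: i; case: j.
subst i.
have rt : mc_d r t = mc_d r' s'.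
  by apply: (@glue_overlap_dist (~~ j)); rewrite ?negbK.
exists (~~ j), s, t', (~~ j), t', t'; split => //; rewrite mc_d_refl adde0.
apply: le_trans (mc_d_triangle _ t _) _; apply: leeD2r.
by apply: le_trans (mc_d_triangle _ r _) _; rewrite rt.
Qed.

Lemma glue_path_trans p p' p'' c c' :
  glue_path p p' c -> glue_path p' p'' c' -> glue_path p p'' (c + c').
Proof.
move=> pp' [j [u [v [k [v' [w [ju kw vv' cost]]]]]]]; subst p' p''.
have := glue_path_append v pp'; rewrite vv' => /(glue_path_append w).
by apply: glue_path_le; rewrite -addeA; exact: leeD2l.
Qed.

Lemma glue_path_cross a b c : glue_path (glue false a) (glue true b) c ->
  exists z, mc_d a (q1 z) + mc_d (q0 z) b <= c.
Proof.
move=> path; have [fst_le snd_le] := glue_path_coord path.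
move: path => [[] [s [r [j [r' [s' [ps ps' rr' cost]]]]]]].
  have [z [az sz]] := glue_overlap (esym ps).
  by exists z; rewrite -az mc_d_refl add0e; move: snd_le; rewrite /= -az q1K.
case: j ps' rr' => ps' rr'.
  move: ps ps' => /glue_inj <- /glue_inj <-.
  by have [z [rz r'z]] := glue_overlap rr'; exists z; rewrite rz r'z.
have [z [sz bz]] := glue_overlap ps'.
by exists z; rewrite -bz mc_d_refl adde0; move: fst_le; rewrite /= -bz q0K.
Qed.

Lemma glue_continuous b : continuous (glue b).
Proof.
case: b.
- exact: pair_continuous (comp_continuous e_mor.1 q1_mor.1) (@id_continuous S).
- exact: pair_continuous (@id_continuous S) (comp_continuous e_mor.1 q0_mor.1).
Qed.

Definition glue_set : set (S * S) := [set p | exists b s, p = glue b s].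

Definition glue_space : topologicalType := glue_set.

Definition glue_in b s : glue_space :=
  exist _ (glue b s) (mem_set (ex_intro _ b (ex_intro _ s erefl))).

Lemma glue_in_continuous b : continuous (glue_in b).
Proof. exact/continuous_comp_initial/glue_continuous. Qed.

Lemma glue_in_cover : jointly_surjective (glue_in false) (glue_in true).
Proof.
move=> [v v_glued]; have [b [s vbs]] := set_mem v_glued; subst v; exists s.
by case: b v_glued => v_glued; [right|left]; apply: val_inj.
Qed.

Lemma glue_space_compact : compact [set: glue_space].
Proof.
have -> : [set: glue_space] = range (glue_in false) `|` range (glue_in true).
  apply/seteqP; split => // p _; have [s [<-|<-]] := glue_in_cover p.
  - by left; exists s.
  - by right; exists s.
by apply: compactU; apply: continuous_compact (@mc_compact R S);
  apply: continuous_subspaceT; exact: glue_in_continuous.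
Qed.

Lemma glue_space_hausdorff : hausdorff_space glue_space.
Proof.
apply: (injective_hausdorff (@initial_continuous glue_set _ set_val) val_inj).
exact: prod_hausdorff (@mc_hausdorff R S) (@mc_hausdorff R S).
Qed.

Definition glue_dist (p p' : glue_space) : \bar R :=
  ereal_inf [set c | glue_path (val p) (val p') c].

Lemma glue_dist_ge0 p p' : 0 <= glue_dist p p'.
Proof. by apply: le_ereal_inf_tmp => c /glue_path_ge0. Qed.

Lemma glue_dist_refl p : glue_dist p p = 0.
Proof.
apply/le_anti/andP; split; last exact: glue_dist_ge0.
apply: ereal_inf_lbound; have [s [<-|<-]] := glue_in_cover p;
  by rewrite -(mc_d_refl s); exact: glue_path_step.
Qed.

Lemma glue_dist_triangle p p' p'' :
  glue_dist p p'' <= glue_dist p p' + glue_dist p' p''.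
Proof.
apply: ereal_inf_le_add; [exact: glue_path_ge0|exact: glue_path_ge0|].
by move=> c c'; exact: glue_path_trans.
Qed.

Lemma glue_dist_sep p p' : glue_dist p p' = 0 -> glue_dist p' p = 0 -> p = p'.
Proof.
have coord0 q q' : glue_dist q q' = 0 ->
    mc_d (val q).1 (val q').1 = 0 /\ mc_d (val q).2 (val q').2 = 0.
  move=> qq'; split; apply/le_anti; rewrite mc_d_ge0 andbT -qq';
    by apply: le_ereal_inf_tmp => c /glue_path_coord[].
move=> /coord0[d1 d2] /coord0[d1' d2']; apply: val_inj.
by move: (val p) (val p') d1 d2 d1' d2' => [x1 x2] [y1 y2] /= *; congr pair;
  exact: mc_d_sep.
Qed.

Lemma glue_dist_leP p p' (r : R) : glue_dist p p' <= r%:E <->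
  forall eps : R, (0 < eps)%R -> glue_path (val p) (val p') (r + eps)%:E.
Proof.
split=> [pp' eps eps0|pp'].
  have /ereal_inf_lt[c path c_lt] : glue_dist p p' < (r + eps)%:E.
    by apply: le_lt_trans pp' _; rewrite lte_fin ltrDl.
  by apply: glue_path_le path; exact: ltW.
apply/lee_addgt0Pr => eps eps0; rewrite -EFinD.
by apply: ereal_inf_lbound; exact: pp'.
Qed.

(* [((s, r), (r', s'))] encodes a path of [glue_path] from [glue i s] to
   [glue j s'] jumping at [glue i r = glue j r']. *)
Definition glue_paths i j (c : R) : set ((S * S) * (S * S)) :=
  [set w | glue i w.1.2 = glue j w.2.1 /\
           mc_d w.1.1 w.1.2 + mc_d w.2.1 w.2.2 <= c%:E].

Lemma glue_pathE (c : R) :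
  [set pp : glue_space * glue_space | glue_path (val pp.1) (val pp.2) c%:E] =
  \bigcup_i \bigcup_j
    ((fun w => (glue_in i w.1.1, glue_in j w.2.2)) @` glue_paths i j c).
Proof.
apply/seteqP; split => [[p p'] [i [s [r [j [r' [s' [ps ps' rr' cost]]]]]]]|].
  exists i => //; exists j => //; exists ((s, r), (r', s')) => //.
  by congr pair; apply: val_inj.
move=> _ [i _ [j _ [[[s r] [r' s']] [/= rr' cost] <-]]].
by exists i, s, r, j, r', s'.
Qed.

Lemma closed_glue_paths i j (c : R) : closed (glue_paths i j c).
Proof.
apply: closedI.
  apply: (closed_eqfun (prod_hausdorff (@mc_hausdorff R S) (@mc_hausdorff R S))).
  - exact: comp_continuous (comp_continuous fst_continuous snd_continuous)
      (@glue_continuous i).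
  - exact: comp_continuous (comp_continuous snd_continuous fst_continuous)
      (@glue_continuous j).
apply: closed_lsc_le; apply: lower_semicontinuousD_ge0 => [w|w||].
- exact: mc_d_ge0.
- exact: mc_d_ge0.
- exact: lower_semicontinuous_comp fst_continuous (@mc_d_lsc R S).
- exact: lower_semicontinuous_comp snd_continuous (@mc_d_lsc R S).
Qed.

Lemma closed_glue_path (c : R) :
  closed [set pp : glue_space * glue_space | glue_path (val pp.1) (val pp.2) c%:E].
Proof.
have S2_compact : compact [set: S * S].
  by rewrite -setXTT; apply: compact_setX; exact: (@mc_compact R S).
have S4_compact : compact [set: (S * S) * (S * S)].
  by rewrite -setXTT; exact: compact_setX.
rewrite glue_pathE.
apply: closed_bigcup_bool => i; apply: closed_bigcup_bool => j /=.
apply: (closed_image_compact S4_compact _ _ (@closed_glue_paths i j c)).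
  exact: prod_hausdorff glue_space_hausdorff glue_space_hausdorff.
apply: pair_continuous.
- exact: comp_continuous (comp_continuous fst_continuous fst_continuous)
    (@glue_in_continuous i).
- exact: comp_continuous (comp_continuous snd_continuous snd_continuous)
    (@glue_in_continuous j).
Qed.

Lemma glue_dist_lsc (r : R) :
  open [set pp : glue_space * glue_space | r%:E < glue_dist pp.1 pp.2].
Proof.
rewrite -closedC.
have -> : ~` [set pp : glue_space * glue_space | r%:E < glue_dist pp.1 pp.2] =
    \bigcap_(eps in [set eps : R | (0 < eps)%R])
      [set pp : glue_space * glue_space |
        glue_path (val pp.1) (val pp.2) (r + eps)%:E].
  apply/seteqP; split => [[p p'] /= /negP|[p p'] /= pp'].
    by rewrite -leNgt => /glue_dist_leP.
  by apply/negP; rewrite -leNgt; apply/glue_dist_leP.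
by apply: closed_bigI => eps _; exact: closed_glue_path.
Qed.

Definition glue_metCH : metCH R := MetCH glue_dist_ge0 glue_dist_refl
  glue_dist_triangle glue_dist_sep glue_dist_lsc glue_space_compact
  glue_space_hausdorff.

Lemma glue_in_mor b : mor (glue_in b : S -> glue_metCH).
Proof.
split; first exact: glue_in_continuous.
by move=> s s'; apply: ereal_inf_lbound; exact: glue_path_step.
Qed.

Lemma glue_pushout :
  is_pushout q1 q0 (glue_in false : S -> glue_metCH) (glue_in true).
Proof.
apply: (@is_pushout_cover R X S glue_metCH q1 q0 (glue_in false) (glue_in true)
  (fun p => (val p).1) (fun p => (val p).2)).
- exact: glue_in_mor.
- exact: glue_in_mor.
- by [].
- by [].
- by apply/funext => x; apply: val_inj; rewrite /= q0K q1K.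
- exact: glue_in_cover.
- by move=> a b /(congr1 val)/glue_overlap.
move=> Q h1 h2 u h1_mor h2_mor uh1 uh2 p p'.
pose h b := if b then h2 else h1.
have uh b s : u (glue_in b s) = h b s.
  by case: b; rewrite /h -?uh1 -?uh2.
have h_ne b s s' : mc_d (h b s) (h b s') <= mc_d s s'.
  by case: b; [exact: h2_mor.2|exact: h1_mor.2].
apply: le_ereal_inf_tmp => c [i [s [r [j [r' [s' [ps ps' rr' cost]]]]]]].
have -> : p = glue_in i s by exact: val_inj.
have -> : p' = glue_in j s' by exact: val_inj.
have ur : u (glue_in i r) = u (glue_in j r') by congr u; exact: val_inj.
apply: le_trans cost; apply: le_trans (mc_d_triangle _ (u (glue_in i r)) _) _.
by apply: leeD; [|rewrite ur]; rewrite !uh; exact: h_ne.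
Qed.

Section equivalence_corelation.
Variable sw : S -> S.
Hypotheses (sw_mor : mor sw) (sw_q0 : sw \o q0 = q1) (sw_q1 : sw \o q1 = q0)
  (q_surj : jointly_surjective q0 q1) (q_trans : transitive_corel q0 q1).

Definition cross_dist x y := mc_d (q0 x) (q1 y).

Lemma cross_dist_sym x y : mc_d (q1 x) (q0 y) = cross_dist x y.
Proof.
have swq0 z : sw (q0 z) = q1 z := congr1 (@^~ z) sw_q0.
have swq1 z : sw (q1 z) = q0 z := congr1 (@^~ z) sw_q1.
apply/le_anti/andP; split.
  by move: (sw_mor.2 (q0 x) (q1 y)); rewrite swq0 swq1.
by move: (sw_mor.2 (q1 x) (q0 y)); rewrite swq0 swq1.
Qed.

Lemma dist_le_cross x y : mc_d x y <= cross_dist x y.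
Proof. by rewrite -{1}(q0K x) -{1}(q1K y); exact: e_mor.2. Qed.

Lemma cross_dist_triangle x w y :
  cross_dist x y <= cross_dist x w + cross_dist w y.
Proof.
apply: le_trans (mc_d_triangle _ (q1 w) _) _; apply: leeD2l.
by rewrite q1_isometry; exact: dist_le_cross.
Qed.

Lemma cross_dist_lsc :
  lower_semicontinuous (fun p : X * X => cross_dist p.1 p.2).
Proof.
exact: lower_semicontinuous_comp
  (pair_continuous (comp_continuous fst_continuous q0_mor.1)
                   (comp_continuous snd_continuous q1_mor.1)) (@mc_d_lsc R S).
Qed.

Lemma cross_dist_midpoint x y (eps : R) : (0 < eps)%R ->
  exists w, cross_dist x w + cross_dist w y <= cross_dist x y + eps%:E.
Proof.
move=> eps0; have [t [t_mor tq0 tq1]] := q_trans glue_pushout.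
have glue_le :
    glue_dist (glue_in false (q0 x)) (glue_in true (q1 y)) <= cross_dist x y.
  have tq0x : t (q0 x) = glue_in false (q0 x) := congr1 (@^~ x) tq0.
  have tq1y : t (q1 y) = glue_in true (q1 y) := congr1 (@^~ y) tq1.
  by rewrite -tq0x -tq1y; exact: t_mor.2.
have [->|fin] := eqVneq (cross_dist x y) +oo; first by exists x; rewrite addye ?leey.
have /ereal_inf_lt[c /glue_path_cross[z cost] c_lt] :
    glue_dist (glue_in false (q0 x)) (glue_in true (q1 y)) < cross_dist x y + eps%:E.
  apply: le_lt_trans glue_le _; rewrite lteDl ?lte_fin //.
  by rewrite ge0_fin_numE ?ltey // mc_d_ge0.
by exists z; exact: le_trans cost (ltW c_lt).
Qed.

Lemma cross_dist_diag z : cross_dist z z = 0 -> q0 z = q1 z.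
Proof. by move=> zz; apply: mc_d_sep; rewrite ?cross_dist_sym. Qed.

Lemma equaliser_point_near x y (delta : R) : (0 < delta)%R ->
  cross_dist x y \is a fin_num ->
  exists2 z, q0 z = q1 z & mc_d x z + mc_d z y <= cross_dist x y + delta%:E.
Proof.
move=> delta0 fin.
have [z /cross_dist_diag zz xzy] := approximate_midpoints_diag (@mc_compact R X)
  (fun x y => mc_d_ge0 (q0 x) (q1 y)) cross_dist_triangle cross_dist_lsc
  cross_dist_midpoint delta0 fin.
by exists z => //; apply: le_trans xzy; apply: leeD; exact: dist_le_cross.
Qed.

Lemma agreeing_mor_cross_le (Q : metCH R) (g g' : X -> Q) : mor g -> mor g' ->
  (forall z, q0 z = q1 z -> g z = g' z) ->
  forall x y, mc_d (g x) (g' y) <= cross_dist x y.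
Proof.
move=> g_mor g'_mor gg' x y.
have [->|nxy] := eqVneq (cross_dist x y) +oo; first exact: leey.
have fin : cross_dist x y \is a fin_num by rewrite ge0_fin_numE ?ltey // mc_d_ge0.
apply/lee_addgt0Pr => delta delta0.
have [z /gg' gz xzy] := equaliser_point_near delta0 fin.
apply: le_trans xzy; apply: le_trans (mc_d_triangle _ (g z) _) _.
by apply: leeD; [exact: g_mor.2|rewrite gz; exact: g'_mor.2].
Qed.

Lemma equivalence_corel_effective : effective_corel q0 q1.
Proof.
move=> A i i_eq; have [_ qi _] := i_eq.
apply: (is_pushout_cover q0_mor q1_mor q0K q1K qi q_surj).
  move=> a b qab; have ab : a = b by rewrite -(q0K a) qab q1K.
  by subst b; have [c <-] := equaliser_image i_eq qab; exists c.
move=> Q h1 h2 u h1_mor h2_mor uq0 uq1 s s'.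
have uh1 x : u (q0 x) = h1 x := congr1 (@^~ x) uq0.
have uh2 x : u (q1 x) = h2 x := congr1 (@^~ x) uq1.
have h12 z : q0 z = q1 z -> h1 z = h2 z by rewrite -uh1 -uh2 => ->.
have [x [<-|<-]] := q_surj s; have [y [<-|<-]] := q_surj s'.
- by rewrite !uh1 q0_isometry; exact: h1_mor.2.
- by rewrite uh1 uh2; exact: agreeing_mor_cross_le.
- by rewrite uh2 uh1 cross_dist_sym; apply: agreeing_mor_cross_le => // z /h12.
- by rewrite !uh2 q1_isometry; exact: h2_mor.2.
Qed.

End equivalence_corelation.

End gluing.

Theorem theorem5p15 (R : realType) (X S : metCH R) (q0 q1 : X -> S) :
  equivalence_corel q0 q1 -> effective_corel q0 q1.
Proof.
move=> [[q0_mor q1_mor q_surj] [e [e_mor eq0 eq1]] [sw [sw_mor sw_q0 sw_q1]]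
  q_trans].
have q0K : cancel q0 e := fun x => congr1 (@^~ x) eq0.
have q1K : cancel q1 e := fun x => congr1 (@^~ x) eq1.
exact: (equivalence_corel_effective q0_mor q1_mor e_mor q0K q1K sw_mor sw_q0 sw_q1
  q_surj q_trans).
Qed.
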